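(* Let $N\subset\mathbb{N}$ be infinite and consider the subsequence $(\bar d_{\gamma_n})_{n\in N}$ of the basis $(\bar d_{\gamma_n})_{n\in\mathbb{N}}$ of $\mathfrak{X}_{\bar\Gamma}$. Then there exists an infinite set $M\subset N$ such that for no two $n,m\in M$ are the nodes $\gamma_n,\gamma_m$ neighbours.
   Context: Fix increasing sequences of positive integers $(m_k),(n_k),(l_k)$ tending to $\infty$ with $m_1=4$, $n_1=4$, $l_1=2$ and $m_km_{k-1}\le m_1^{l_k}$, $(n_{k-1}/m_{k-1})^{l_k}\le n_k/(m_{k-1}m_k)$ for all $k$. For each $q$ let $\mathrm{Net}_{1,q}$ be a finite symmetric $\frac{1}{4n_q^2}$-net of $[-1,1]$ containing $\pm1$. Construction of $\mathfrak{X}_{\bar\Gamma}$: finite sets of nodes $\bar\Delta_q$ are defined recursively, with $\bar\Gamma_q=\bar\Delta_1\cup\dots\cup\bar\Delta_q$; nodes are enumerated $(\gamma_n)_n$ so that each $\bar\Gamma_q$ is the initial interval $\{1,\dots,\#\bar\Gamma_q\}$ of $\mathbb N$ (so intervals of nodes make sense). For each $\gamma\in\bar\Delta_{q}$ one defines $\bar c^*_\gamma\in\ell_1(\bar\Gamma_{q-1})$ and $\bar d^*_\gamma=e^*_\gamma-\bar c^*_\gamma$, where $(e^*_\gamma)$ is the unit vector basis of $\ell_1$; then $\mathrm{span}\{\bar d^*_{\gamma_i}:i\le n\}=\mathrm{span}\{e^*_{\gamma_i}:i\le n\}$ for all $n$, and for an interval $I$ let $\bar P^*_I$ be the projection $\sum_n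 a_n\bar d^*_{\gamma_n}\mapsto\sum_{n\in I}a_n\bar d^*_{\gamma_n}$. Start with $\bar\Delta_1=\{1\}$, $\bar c^*_1=0$. Given $\bar\Delta_1,\dots,\bar\Delta_q$, the set $\bar\Delta_{q+1}$ consists of: (a) all tuples $\gamma=(q+1,0,m_j,I,\epsilon,\lambda e^*_\eta)$ with $1\le j\le q$, $I$ an interval in $\bar\Gamma_q$, $\epsilon\in\{\pm1\}$, $\lambda\in\mathrm{Net}_{1,q}$, $\eta\in\bar\Gamma_q$, $\bar P^*_I e^*_\eta\ne0$, $\lambda\neq 0$; for these $\bar c^*_\gamma=\frac{1}{m_j}\epsilon\lambda\bar P^*_Ie^*_\eta$, and we set $\mathrm{age}(\gamma)=1$; (b) all tuples $\gamma=(q+1,\xi,m_j,I,\epsilon,\lambda e^*_\eta)$ with $1\le p<q$, $1\le j\le p$, $\xi\in\bar\Delta_p$ of weight $m_j^{-1}$ and $\mathrm{age}(\xi)<n_j$, $\epsilon\in\{\pm1\}$, $\lambda\in\mathrm{Net}_{1,q}$, $\eta\in\bar\Gamma_q\setminus\bar\Gamma_p$, $I$ an interval in $\bar\Gamma_q\setminus\bar\Gamma_p$, $\bar P^*_I(\lambda e^*_\eta)\ne0$; for these $\bar c^*_\gamma=e^*_\xi+\frac1{m_j}\epsilon\lambda\bar P^*_Ie^*_\eta$ and $\mathrm{age}(\gamma)=\mathrm{age}(\xi)+1$. In both cases the weight of $\gamma$ is $w(\gamma)=m_j^{-1}$ and $\mathrm{rank}(\gamma)=q+1$. Let $\bar\Gamma=\bigcup_q\bar\Gamma_q$,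 let $\bar d_\gamma\in\ell_\infty(\bar\Gamma)$ be the vectors biorthogonal to $(\bar d^*_\delta)_\delta$ (i.e. $\bar d^*_\delta(\bar d_\gamma)=\delta_{\gamma\delta}$), and let $\mathfrak{X}_{\bar\Gamma}$ be their closed linear span in $\ell_\infty(\bar\Gamma)$ with the sup norm; $(\bar d_{\gamma_n})_n$ is a basis of $\mathfrak X_{\bar\Gamma}$. Evaluation analysis and neighbours: every node $\gamma\ne 1$ of weight $m_j^{-1}$ determines a unique chain $\xi_1,\dots,\xi_a=\gamma$ where $\xi_1$ has second coordinate $0$ and $\xi_i=(q_i+1,\xi_{i-1},m_j,\dots)$ for $1<i\le a$; the bd-part of $e^*_\gamma$ is $\sum_{i=1}^a\bar d^*_{\xi_i}$. Two nodes $\zeta,\zeta'$ are called neighbours if there is a node $\gamma$ whose chain $(\xi_i)_{i=1}^a$ satisfies $\zeta=\xi_{i_1}$, $\zeta'=\xi_{i_2}$ for some $i_1<i_2$. *)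

From HB Require Import structures.
From mathcomp Require Import all_boot all_order all_algebra.
From mathcomp Require Import reals.
Set Implicit Arguments. Unset Strict Implicit. Unset Printing Implicit Defensive.
Import Order.TTheory GRing.Theory Num.Theory.
Local Open Scope ring_scope.

(* Conventions:
   - the sequences m, n, l are indexed from 1 (values at 0 are irrelevant);
   - nodes are identified with their index in the enumeration, 0-based:
     node k (k : nat) is gamma_{k+1}; node 0 is the root (Delta_1 = {1});
   - S q = #Gamma_q, so Gamma_q = [0, S q) and Delta_{q+1} = [S q, S (q+1));
   - an interval I of nodes is [a, b] with a <= b (empty intervals can never
     satisfy the non-vanishing condition P*_I(lam e*_eta) <> 0);
   - vectors of l_1 with finite support are functions nat -> R, the
     coordinate i being the coefficient of e*_{gamma_i}. *)

Definition params (R : realType) (m n l : nat -> nat) : Prop :=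
  [/\ (forall k, (1 <= k)%N -> [/\ (0 < m k)%N, (0 < n k)%N & (0 < l k)%N]),
      (forall k, (1 <= k)%N -> [/\ (m k < m k.+1)%N, (n k < n k.+1)%N & (l k < l k.+1)%N]),
      [/\ m 1%N = 4%N, n 1%N = 4%N & l 1%N = 2%N],
      (forall k, (2 <= k)%N -> (m k * m k.-1 <= (m 1%N) ^ (l k))%N) &
      (forall k, (2 <= k)%N ->
         ((n k.-1)%:R / (m k.-1)%:R) ^+ (l k) <= (n k)%:R / ((m k.-1)%:R * (m k)%:R :> R))].

Definition nets (R : realType) (n : nat -> nat) (Net : nat -> seq R) : Prop :=
  forall q, (1 <= q)%N ->
    [/\ (forall x, x \in Net q -> -1 <= x <= 1),
        (forall x, x \in Net q -> - x \in Net q),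
        1 \in Net q, -1 \in Net q &
        (forall x : R, -1 <= x <= 1 ->
           exists2 y, y \in Net q & `|x - y| <= ((4 * (n q) ^ 2)%:R)^-1)].

(* The tuple gamma = (rank, xi or 0, m_j, I = [a,b], eps, lam e*_eta). *)
Record NodeData (R : Type) := MkNode {
  nd_rank : nat;
  nd_par  : option nat;   (* None = second coordinate 0; Some xi = xi *)
  nd_j    : nat;          (* weight m_j^{-1} *)
  nd_a    : nat;          (* interval I = [a, b] *)
  nd_b    : nat;
  nd_eps  : R;
  nd_lam  : R;
  nd_eta  : nat }.

Record Constr (R : Type) := MkConstr {
  S     : nat -> nat;              (* S q = #Gamma_q *)
  node  : nat -> NodeData R;       (* tuple of node k, k >= 1 *)
  age   : nat -> nat;
  cstar : nat -> nat -> R;         (* cstar k = c*_{gamma_k} *)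
  dexp  : nat -> nat -> R }.       (* e*_eta = sum_n dexp eta n * d*_n *)

Section Derived.
Variables (R : realType) (C : Constr R).

Definition dstar (k i : nat) : R := (k == i)%:R - cstar C k i.

(* P*_[a,b] e*_eta, written in the e*-coordinates *)
Definition projE (a b eta : nat) (i : nat) : R :=
  \sum_(a <= k < b.+1) dexp C eta k * dstar k i.

End Derived.

(* Admissible tuples forming Delta_{q+1}, for q >= 1: clauses (a) and (b). *)
Definition admissible (R : realType) (m n : nat -> nat) (Net : nat -> seq R)
    (C : Constr R) (q : nat) (t : NodeData R) : Prop :=
  let j := nd_j t in let a := nd_a t in let b := nd_b t in
  let eta := nd_eta t in let lam := nd_lam t in
  [/\ nd_rank t = q.+1, nd_eps t = 1 \/ nd_eps t = -1, lam \in Net q,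
      (fun i => lam * projE C a b eta i) <> (fun _ => 0) &
      match nd_par t with
      | None => [/\ (1 <= j <= q)%N, (a <= b)%N, (b < S C q)%N,
                    lam != 0 & (eta < S C q)%N]
      | Some xi =>
          exists p, [/\ (1 <= p < q)%N, (1 <= j <= p)%N,
                        (S C p.-1 <= xi < S C p)%N && (1 <= xi)%N,
                        nd_j (node C xi) = j & (age C xi < n j)%N] /\
                    [/\ (S C p <= eta < S C q)%N, (S C p <= a)%N,
                        (a <= b)%N & (b < S C q)%N]
      end].

Definition IsConstr (R : realType) (m n : nat -> nat) (Net : nat -> seq R)
    (C : Constr R) : Prop :=
  [/\ [/\ S C 0 = 0%N, S C 1 = 1%N & (forall q, (S C q <= S C q.+1)%N)],
      (* Delta_{q+1} = [S q, S (q+1)) is enumerated bijectively *)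
      (forall q, (1 <= q)%N ->
        [/\ (forall k, (S C q <= k < S C q.+1)%N -> admissible m n Net C q (node C k)),
            (forall t, admissible m n Net C q t ->
               exists2 k, (S C q <= k < S C q.+1)%N & node C k = t) &
            (forall k k', (S C q <= k < S C q.+1)%N -> (S C q <= k' < S C q.+1)%N ->
               node C k = node C k' -> k = k')]),
      (forall k, (1 <= k)%N ->
         age C k = match nd_par (node C k) with
                   | None => 1%N
                   | Some xi => (age C xi).+1 end),
      (cstar C 0 = fun _ => 0) /\
      (forall k i, (1 <= k)%N ->
         let t := node C k in
         cstar C k i =
           (match nd_par t with None => 0 | Some xi => (i == xi)%:R end)
           + ((m (nd_j t))%:R)^-1 * nd_eps t * nd_lam t
               * projE C (nd_a t) (nd_b t) (nd_eta t) i) &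
      (* expansion of e*_eta in the basis (d*_n) *)
      (forall eta k, (eta < k)%N -> dexp C eta k = 0) /\
      (forall eta i, (eta == i)%:R = \sum_(k < eta.+1) dexp C eta k * dstar C k i)].

Definition is_chain (R : Type) (C : Constr R) (s : seq nat) : Prop :=
  [/\ s <> [::], all (fun k => 0 < k)%N s,
      nd_par (node C (head 0%N s)) = None &
      forall i, (i.+1 < size s)%N ->
        nd_par (node C (nth 0%N s i.+1)) = Some (nth 0%N s i)].

Definition neighbours (R : Type) (C : Constr R) (z z' : nat) : Prop :=
  exists s i1 i2, [/\ is_chain C s, (i1 < i2 < size s)%N,
                      nth 0%N s i1 = z & nth 0%N s i2 = z'].

Definition infinite_nat (A : nat -> Prop) : Prop :=
  forall k, exists2 x, (k <= x)%N & A x.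

From mathcomp Require Import all_boot all_algebra.
From mathcomp Require Import reals boolp.

(* Two neighbours lie on one chain, along which the weight is constant and the
   age grows by one at each step; so neighbours have equal weight m_j^-1 and
   different ages.  An infinite N has an infinite subset on which the weight is
   either injective, and then no two of its nodes are neighbours, or constant
   m_j^-1.  In the latter case the ages are bounded by n_j (a node of age n_j
   has no extension), so by pigeonhole an infinite subset has constant age, and
   again contains no two neighbours. *)

Set Implicit Arguments.
Unset Strict Implicit.
Unset Printing Implicit Defensive.
Import GRing.Theory.

Section InfiniteSubsets.
Variable A : nat -> Prop.
Hypothesis A_inf : infinite_nat A.

Lemma infinite_nat_ge k : infinite_nat (fun x => A x /\ k <= x).
Proof.
move=> k'; have [x + Ax] := A_inf (maxn k' k).
by rewrite geq_max => /andP[k'x kx]; exists x.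
Qed.

Section FiniteFibres.
Variable f : nat -> nat.
Hypothesis fibre_fin : forall v, exists K, forall x, K <= x -> A x -> f x != v.

Lemma infinite_nat_avoid (L : seq nat) k : exists x, [/\ k <= x, A x & f x \notin L].
Proof.
elim: L k => [|v L IHL] k; first by have [x kx Ax] := A_inf k; exists x.
have [K fvK] := fibre_fin v.
have [x [+ Ax fxL]] := IHL (maxn k K).
rewrite geq_max => /andP[kx Kx].
by exists x; rewrite in_cons negb_or fxL andbT fvK.
Qed.

Lemma finite_fibres_injective_subset :
  exists B : nat -> Prop, [/\ forall x, B x -> A x, infinite_nat B &
    forall a b, B a -> B b -> f a = f b -> a = b].
Proof.
exists (fun x => A x /\ forall y, y < x -> A y -> f y != f x); split.
- by move=> x [].
- move=> k; have [x [kx Ax fxL]] := infinite_nat_avoid [seq f y | y <- iota 0 k] k.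
  have fibre_x : exists y, `[< A y /\ f y = f x >] by exists x; apply/asboolP.
  case: (ex_minnP fibre_x) => y /asboolP[Ay fyx] ymin.
  have ky : k <= y.
    rewrite leqNgt; apply: contra fxL => yk; apply/mapP.
    by exists y; rewrite // mem_iota.
  exists y => //; split=> // z zy Az; apply/eqP => fzy.
  have /ymin : `[< A z /\ f z = f x >] by apply/asboolP; rewrite fzy.
  by rewrite leqNgt zy.
- move=> a b [Aa amin] [Ab bmin] fab.
  case: (ltngtP a b) => // [ab | ba]; first by move: (bmin a ab Aa); rewrite fab eqxx.
  by move: (amin b ba Ab); rewrite fab eqxx.
Qed.
End FiniteFibres.

Lemma infinite_fibre_or_finite_fibres (f : nat -> nat) :
  (exists v, infinite_nat (fun x => A x /\ f x = v)) \/
  (forall v, exists K, forall x, K <= x -> A x -> f x != v).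
Proof.
case: (pselect (exists v, infinite_nat (fun x => A x /\ f x = v))) => [|no_inf]; first by left.
right=> v; have /existsNP[K noK] : ~ infinite_nat (fun x => A x /\ f x = v).
  by move=> fibre_inf; apply: no_inf; exists v.
by exists K => x Kx Ax; apply/eqP => fxv; apply: noK; exists x.
Qed.

Lemma bounded_infinite_fibre (f : nat -> nat) b : (forall x, A x -> f x <= b) ->
  exists v, infinite_nat (fun x => A x /\ f x = v).
Proof.
move=> fb; case: (infinite_fibre_or_finite_fibres f) => // fibre_fin.
have [x [_ Ax]] := infinite_nat_avoid fibre_fin (iota 0 b.+1) 0.
by rewrite mem_iota ltnS fb.
Qed.

Lemma infinite_constant_or_injective_subset (f : nat -> nat) :
  exists B : nat -> Prop, [/\ forall x, B x -> A x, infinite_nat B &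
    (exists v, forall x, B x -> f x = v) \/
    (forall a b, B a -> B b -> f a = f b -> a = b)].
Proof.
case: (infinite_fibre_or_finite_fibres f) => [[v fibre_inf] | fibre_fin].
- by exists (fun x => A x /\ f x = v); split=> //; [move=> x [] | left; exists v => x []].
- have [B [BA B_inf B_inj]] := finite_fibres_injective_subset fibre_fin.
  by exists B; split=> //; right.
Qed.

End InfiniteSubsets.

Lemma bracket_index (f : nat -> nat) k r : f 0 <= k -> f 1 <= k -> k < f r ->
  exists q, [/\ 0 < q, f q <= k & k < f q.+1].
Proof.
move=> f0k f1k kfr; have above_k : exists q, k < f q by exists r.
case: (ex_minnP above_k) => -[|[|q]] kfq qmin.
- by rewrite ltnNge f0k in kfq.
- by rewrite ltnNge f1k in kfq.
exists q.+1; split=> //; rewrite leqNgt; apply/negP => /qmin.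
by rewrite ltnn.
Qed.

Section Construction.
Variables (R : realType) (m n l : nat -> nat) (Net : nat -> seq R) (C : Constr R).
Hypotheses (Hp : params R m n l) (Hn : nets n Net) (HC : IsConstr m n Net C).

(* Each level q+1 contains the node (q+1, 0, m_1, {root}, 1, e*_root). *)
Lemma S_lt_succ q : S C q < S C q.+1.
Proof.
have [[S0 S1 S_le] Delta _ [cstar0 _] [_ e_expand]] := HC.
case: q => [|q]; first by rewrite S0 S1.
have [_ Delta_onto _] := Delta q.+1 isT.
have [_ _ Net1 _ _] := @Hn q.+1 isT.
have S_pos : 0 < S C q.+1.
  by elim: {Delta_onto Net1} q => [|q IHq]; [rewrite S1 | exact: leq_trans IHq (S_le _)].
have dstar00 : dstar C 0 0 = 1%R by rewrite /dstar cstar0 subr0.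
have dexp00 : dexp C 0 0 = 1%R.
  by move: (e_expand 0 0); rewrite big_ord1 dstar00 mulr1.
have : admissible m n Net C q.+1 (MkNode q.+2 None 1 0 0 1%R 1%R 0).
  split=> //=; first by left.
  - move=> /(congr1 (fun f => f 0)) /= /eqP.
    by rewrite mul1r /projE big_nat1 dexp00 dstar00 mulr1 oner_eq0.
  - by rewrite S_pos oner_eq0.
by case/Delta_onto => k /andP[lo hi] _; exact: leq_ltn_trans lo hi.
Qed.

Lemma node_admissible k : 0 < k -> exists2 q, 0 < q & admissible m n Net C q (node C k).
Proof.
move=> k_pos; have [[S0 S1 _] Delta _ _ _] := HC.
have S_ge q : q <= S C q.
  by elim: q => // q IHq; exact: leq_ltn_trans IHq (S_lt_succ q).
have S0k : S C 0 <= k by rewrite S0.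
have S1k : S C 1 <= k by rewrite S1.
have [q [q_pos lo hi]] := bracket_index S0k S1k (S_ge k.+1).
exists q => //; have [Delta_adm _ _] := Delta q q_pos.
by apply: Delta_adm; rewrite lo hi.
Qed.

Lemma parent_weight_age k xi : 0 < k -> nd_par (node C k) = Some xi ->
  nd_j (node C xi) = nd_j (node C k) /\ age C k = (age C xi).+1.
Proof.
move=> k_pos par_k; have [_ _ age_def _ _] := HC.
have [q _] := node_admissible k_pos.
case=> _ _ _ _; rewrite par_k => -[p [[_ _ _ j_xi _] _]].
by split=> //; rewrite age_def // par_k.
Qed.

Lemma age_le_n k : 0 < k -> age C k <= n (nd_j (node C k)).
Proof.
move=> k_pos; have [n_pos _ _ _ _] := Hp; have [_ _ age_def _ _] := HC.
have [q _] := node_admissible k_pos.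
rewrite age_def //; case=> _ _ _ _; case: (nd_par _) => [xi | ].
- by case=> p [[_ _ _ _ age_xi] _].
- by case=> /andP[j_pos _] _ _ _ _; have [_ -> _] := n_pos _ j_pos.
Qed.

Lemma neighbours_weight_age a b : neighbours C a b ->
  nd_j (node C a) = nd_j (node C b) /\ age C a < age C b.
Proof.
case=> s [i1 [i2 [[_ /(all_nthP 0) s_pos _ s_par] /andP[i12 i2s] <- <-]]].
pose below := [rel x y | (nd_j (node C x) == nd_j (node C y)) && (age C x < age C y)].
have below_trans : transitive below.
  move=> y x z /andP[/eqP jxy axy] /andP[/eqP jyz ayz].
  by rewrite /= jxy jyz eqxx (ltn_trans axy ayz).
have s_sorted : sorted below s.
  apply/(sortedP 0) => i i_lt.
  have [j_par age_par] := parent_weight_age (s_pos _ i_lt) (s_par i i_lt).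
  by rewrite /= j_par age_par ltnSn eqxx.
by have /andP[/eqP -> ->] := sorted_ltn_nth below_trans 0 s_sorted i1 i2 (ltn_trans i12 i2s) i2s i12.
Qed.

End Construction.

Theorem lemma3p2 (R : realType) (m n l : nat -> nat) (Net : nat -> seq R)
    (C : Constr R) :
  params R m n l -> nets n Net -> IsConstr m n Net C ->
  forall N : nat -> Prop, infinite_nat N ->
  exists M : nat -> Prop,
    [/\ (forall k, M k -> N k), infinite_nat M &
        forall a b, M a -> M b -> ~ neighbours C a b].
Proof.
move=> Hp Hn HC N N_inf.
have [B [BN B_inf [[j Bj] | B_inj]]] :=
  infinite_constant_or_injective_subset (infinite_nat_ge N_inf 1) (fun k => nd_j (node C k)).
- have age_le k : B k -> age C k <= n j.
    move=> Bk; have [_ k_pos] := BN k Bk.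
    by rewrite -(Bj k Bk); exact: (age_le_n Hp Hn HC k_pos).
  have [v age_v_inf] := bounded_infinite_fibre B_inf age_le.
  exists (fun k => B k /\ age C k = v); split=> //; first by move=> k [/BN[]].
  move=> a b [_ av] [_ bv] /(neighbours_weight_age Hn HC) [_].
  by rewrite av bv ltnn.
- exists B; split=> //; first by move=> k /BN[].
  move=> a b Ba Bb /(neighbours_weight_age Hn HC) [j_ab age_ab].
  by move: age_ab; rewrite (B_inj a b Ba Bb j_ab) ltnn.
Qed.
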